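(* Let $a,b,c$ be positive numbers with $a<b<c$, $b-a<c_0<a$, $0<c_1<2a-b$ and $\lfloor c/b\rfloor\ge2$, where $c_0=c-\lfloor c/b\rfloor b$ and $c_1=\lfloor c/b\rfloor b-\lfloor\lfloor c/b\rfloor b/a\rfloor a$. Then $\mathcal S_{a,b,c}=\emptyset$ if and only if for every $t\in\mathbb R$ there exists $t_0\in[c_0+a-b,c_0)$ such that $$\lim_{n\to\infty}\frac1n\sum_{k=0}^{n-1}f\big((R_{a,b,c})^k(t)\big)=f(t_0)$$ for every continuous $a$-periodic function $f:\mathbb R\to\mathbb C$.
   Context: For $a,b,c>0$ and $t\in\mathbb R$, $\mathbf M_{a,b,c}(t)=(\chi_{[0,c)}(t-\mu+\lambda))_{\mu\in a\mathbb Z,\lambda\in b\mathbb Z}$ is the infinite matrix with rows indexed by $a\mathbb Z$ and columns by $b\mathbb Z$, acting by $(\mathbf M_{a,b,c}(t)\mathbf x)(\mu)=\sum_{\lambda\in b\mathbb Z}\chi_{[0,c)}(t-\mu+\lambda)\mathbf x(\lambda)$. $\mathcal B_b^0$ is the set of vectors $(\mathbf x(\lambda))_{\lambda\in b\mathbb Z}$ with entries in $\{0,1\}$ and $\mathbf x(0)=1$. $\mathbf 1$ denotes the vector indexed by $a\mathbb Z$ with all entries $1$. $\mathcal S_{a,b,c}=\{t:\mathbf M_{a,b,c}(t)\mathbf x=\mathbf 1\text{ for some }\mathbf x\in\mathcal B_b^0\}$. $R_{a,b,c}(t)=t+\lfloor c/b\rfloor b+b$ if $t\in[0,c_0+a-b)+a\mathbb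 Z$, $R_{a,b,c}(t)=t$ if $t\in[c_0+a-b,c_0)+a\mathbb Z$, $R_{a,b,c}(t)=t+\lfloor c/b\rfloor b$ if $t\in[c_0,a)+a\mathbb Z$; $(R_{a,b,c})^k$ is the $k$-fold iterate. $A+a\mathbb Z=\{x+ak:x\in A,k\in\mathbb Z\}$. *)

From Stdlib Require Import Reals Lra Lia ZArith.
Open Scope R_scope.

Definition Rfloor (x : R) : Z := (up x - 1)%Z.

Definition chi0c (c x : R) : R :=
  if Rle_dec 0 x then (if Rlt_dec x c then 1 else 0) else 0.

(* entry (M_{a,b,c}(t))_{mu,lambda} with mu = a*m, lambda = b*k *)
Definition Mentry (a b c t : R) (m k : Z) : R :=
  chi0c c (t - a * IZR m + b * IZR k).

Definition symsum (g : Z -> R) (N : nat) : R :=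
  sum_f_R0 (fun i => g (Z.of_nat i - Z.of_nat N)%Z) (2 * N).

(* (M x)(a m) = v : the series over b Z (whose terms vanish for all but
   finitely many k) converges to v *)
Definition Mapply_eq (a b c t : R) (x : Z -> R) (m : Z) (v : R) : Prop :=
  Un_cv (symsum (fun k => Mentry a b c t m k * x k)) v.

(* B_b^0 : vectors indexed by b Z (lambda = b k) with entries in {0,1}, x(0)=1 *)
Definition in_B0 (x : Z -> R) : Prop :=
  (forall k, x k = 0 \/ x k = 1) /\ x 0%Z = 1.

Definition in_S (a b c t : R) : Prop :=
  exists x, in_B0 x /\ forall m : Z, Mapply_eq a b c t x m 1.

Definition c0 (b c : R) : R := c - IZR (Rfloor (c / b)) * b.

Definition modR (a t : R) : R := t - a * IZR (Rfloor (t / a)).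

Definition Rmap (a b c t : R) : R :=
  let r := modR a t in
  let q := IZR (Rfloor (c / b)) * b in
  if Rlt_dec r (c0 b c + a - b) then t + q + b
  else if Rlt_dec r (c0 b c) then t
  else t + q.

Definition Cplx := (R * R)%type.

Definition cont_C (f : R -> Cplx) : Prop :=
  continuity (fun x => fst (f x)) /\ continuity (fun x => snd (f x)).

Definition periodic_C (a : R) (f : R -> Cplx) : Prop :=
  forall x, f (x + a) = f x.

(* (1/n) sum_{k=0}^{n-1} g k, for n >= 1 (sequence indexed by n-1) *)
Definition cesaro (g : nat -> R) (n : nat) : R :=
  sum_f_R0 g n / INR (S n).

Definition cesaro_lim_C (f : R -> Cplx) (T : nat -> R) (z : Cplx) : Prop :=
  Un_cv (cesaro (fun k => fst (f (T k)))) (fst z) /\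
  Un_cv (cesaro (fun k => snd (f (T k)))) (snd z).

(* A point t lies in S iff some set of points t + bk (containing t) meets
   every window [a m, a m + c) exactly once (in_S_tiling).  In such a tiling the selected
   point after w is w + step (w mod a), which is R_{a,b,c}(w) (tiling_step); so orbits of
   points of S never reach the stuck window, where R_{a,b,c} is the identity.
   (<-) Both steps are non-multiples of a, so a narrow a-periodic bump centred at t0 is
   never positive at two consecutive points of such an orbit: its Cesàro mean is at most
   half its value at t0 (free_orbit_not_equidistributed).
   (->) A stuck orbit is eventually constant.  Otherwise its residues mod a form an orbit
   of the residue map [red], a translation between three cut points.  By
   Bolzano-Weierstrass and a drift argument the orbit has a right-recurrent point; [red]
   maps the recurrent points onto themselves, so they carry a bi-infinite orbit, and its
   lift to t + bZ is a tiling (orbit_in_S), i.e. S is nonempty. *)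

From Stdlib Require Import Reals Lra Lia Psatz ZArith List Classical ClassicalEpsilon.
Open Scope R_scope.

Lemma Rfloor_spec x : IZR (Rfloor x) <= x < IZR (Rfloor x) + 1.
Proof.
  unfold Rfloor. destruct (archimed x) as [H1 H2].
  rewrite minus_IZR. simpl. lra.
Qed.

Lemma Rfloor_unique x n : IZR n <= x < IZR n + 1 -> Rfloor x = n.
Proof.
  intros [H1 H2]. destruct (Rfloor_spec x) as [H3 H4].
  assert (Hlt : (Rfloor x < n + 1)%Z) by (apply lt_IZR; rewrite plus_IZR; simpl; lra).
  assert (Hgt : (n < Rfloor x + 1)%Z) by (apply lt_IZR; rewrite plus_IZR; simpl; lra).
  lia.
Qed.

Lemma Rfloor_nonneg x : 0 <= x -> (0 <= Rfloor x)%Z.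
Proof.
  intros H. destruct (Rfloor_spec x).
  assert ((-1 < Rfloor x)%Z) by (apply lt_IZR; simpl; lra). lia.
Qed.

Section Modulo.
Variable a : R.
Hypothesis a_pos : 0 < a.

Lemma modR_spec x : 0 <= modR a x < a /\ x = modR a x + a * IZR (Rfloor (x / a)).
Proof.
  unfold modR. destruct (Rfloor_spec (x / a)) as [H1 H2].
  set (F := IZR (Rfloor (x / a))) in *.
  assert (E : x = a * (x / a)) by (field; lra).
  assert (a * F <= a * (x / a)) by (apply Rmult_le_compat_l; lra).
  assert (a * (x / a) < a * (F + 1)) by (apply Rmult_lt_compat_l; lra).
  split; [split|]; lra.
Qed.

Lemma modR_charac x y n : 0 <= y < a -> x = y + a * IZR n -> modR a x = y.
Proof.
  intros Hy E. unfold modR.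
  assert (Rfloor (x / a) = n) as ->; [|lra].
  apply Rfloor_unique. subst x.
  replace ((y + a * IZR n) / a) with (y / a + IZR n) by (field; lra).
  assert (0 <= y / a < 1).
  { split; [apply Rmult_le_pos; [lra | left; apply Rinv_0_lt_compat; lra]|].
    apply (Rmult_lt_reg_r a); [lra|]. replace (y / a * a) with y by (field; lra). lra. }
  lra.
Qed.

Lemma modR_shift x n : modR a (x + a * IZR n) = modR a x.
Proof.
  destruct (modR_spec x) as [H1 H2].
  apply modR_charac with (n := (Rfloor (x / a) + n)%Z); auto.
  rewrite plus_IZR. lra.
Qed.

Lemma periodic_Z (f : R -> Cplx) : periodic_C a f -> forall n x, f (x + a * IZR n) = f x.
Proof.
  intros Hp.
  assert (Hn : forall (n : nat) x, f (x + a * INR n) = f x).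
  { induction n as [|n IH]; intros x; [simpl; f_equal; ring|].
    rewrite S_INR. replace (x + a * (INR n + 1)) with ((x + a * INR n) + a) by ring.
    rewrite Hp. apply IH. }
  intros n x. destruct (Z_le_dec 0 n) as [H|H].
  - rewrite <- (Z2Nat.id n) by auto. rewrite <- INR_IZR_INZ. apply Hn.
  - rewrite <- (Hn (Z.to_nat (- n)) (x + a * IZR n)). rewrite INR_IZR_INZ, Z2Nat.id by lia.
    rewrite opp_IZR. f_equal. ring.
Qed.

Lemma periodic_modR (f : R -> Cplx) x : periodic_C a f -> f x = f (modR a x).
Proof.
  intros Hp. destruct (modR_spec x) as [_ E]. rewrite E at 1. apply periodic_Z, Hp.
Qed.

Lemma residue_eq x y n : 0 <= x < a -> 0 <= y < a -> x = y + a * IZR n -> x = y.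
Proof.
  intros Hx Hy E. rewrite <- (modR_charac x y n Hy E).
  symmetry. apply (modR_charac x x 0); [exact Hx| simpl; ring].
Qed.

End Modulo.

Lemma sum_zero g n : (forall i, (i <= n)%nat -> g i = 0) -> sum_f_R0 g n = 0.
Proof.
  induction n; intros H; simpl; [apply H; lia|].
  rewrite IHn by (intros; apply H; lia). rewrite H by lia. lra.
Qed.

Lemma sum_single g n i0 : (i0 <= n)%nat -> g i0 = 1 ->
  (forall i, (i <= n)%nat -> i <> i0 -> g i = 0) -> sum_f_R0 g n = 1.
Proof.
  induction n; intros Hi Hg H; simpl.
  - replace i0 with 0%nat in Hg by lia. exact Hg.
  - destruct (Nat.eq_dec i0 (S n)) as [->|Hne].
    + rewrite sum_zero by (intros; apply H; lia). lra.
    + rewrite IHn, H by (auto; try lia; intros; apply H; lia). lra.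
Qed.

Lemma sum_ge_two g n i j : (forall k, 0 <= g k) -> (i <= n)%nat -> (j <= n)%nat -> i <> j ->
  g i + g j <= sum_f_R0 g n.
Proof.
  intros Hg.
  assert (Hone : forall n i, (i <= n)%nat -> g i <= sum_f_R0 g n).
  { clear n i j. induction n as [|n IH]; intros i Hi; simpl.
    - replace i with 0%nat by lia. lra.
    - destruct (Nat.eq_dec i (S n)) as [->|Hne].
      + pose proof (cond_pos_sum g n Hg). lra.
      + pose proof (IH i ltac:(lia)). pose proof (Hg (S n)). lra. }
  revert i j. induction n as [|n IH]; intros i j Hi Hj Hij; simpl; [lia|].
  destruct (Nat.eq_dec j (S n)) as [->|Hj'];
    [pose proof (Hone n i ltac:(lia)); lra|].
  destruct (Nat.eq_dec i (S n)) as [->|Hi'];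
    [pose proof (Hone n j ltac:(lia)); lra|].
  pose proof (IH i j ltac:(lia) ltac:(lia) Hij). pose proof (Hg (S n)). lra.
Qed.

Lemma symsum_term (g : Z -> R) N k : (Z.abs k <= Z.of_nat N)%Z ->
  let i := Z.to_nat (k + Z.of_nat N) in
  (i <= 2 * N)%nat /\ g (Z.of_nat i - Z.of_nat N)%Z = g k.
Proof. intros H i. unfold i. split; [lia| f_equal; lia]. Qed.

Lemma symsum_cv_one (g : Z -> R) : (forall k, g k = 0 \/ g k = 1) ->
  Un_cv (symsum g) 1 <-> exists! k, g k = 1.
Proof.
  intros H01. split.
  - intros Hcv. destruct (classic (exists k, g k = 1)) as [[k Hk]|Hnone].
    + exists k. split; [exact Hk|]. intros k' Hk'. apply NNPP. intros Hne.
      destruct (Hcv 1 ltac:(lra)) as [N0 HN0].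
      set (N := (N0 + Z.to_nat (Z.abs k) + Z.to_nat (Z.abs k'))%nat).
      specialize (HN0 N ltac:(unfold N; lia)).
      destruct (symsum_term g N k ltac:(unfold N; lia)) as [Hi Ei].
      destruct (symsum_term g N k' ltac:(unfold N; lia)) as [Hj Ej].
      pose proof (sum_ge_two (fun i => g (Z.of_nat i - Z.of_nat N)%Z) (2 * N) _ _
                   (fun i => ltac:(destruct (H01 (Z.of_nat i - Z.of_nat N)%Z); lra))
                   Hi Hj ltac:(intros E; apply Hne; lia)) as Hge.
      cbv beta in Hge. rewrite Ei, Ej, Hk, Hk' in Hge.
      unfold R_dist, symsum in HN0. apply Rabs_def2 in HN0. lra.
    + assert (Hcv0 : Un_cv (symsum g) 0).
      { intros eps He. exists 0%nat. intros n _. unfold R_dist, symsum.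
        rewrite sum_zero, Rminus_0_r, Rabs_R0 by
          (intros i _; destruct (H01 (Z.of_nat i - Z.of_nat n)%Z) as [E|E];
           [exact E| exfalso; apply Hnone; eauto]). exact He. }
      pose proof (UL_sequence _ _ _ Hcv Hcv0). lra.
  - intros [k [Hk Huniq]] eps He. exists (Z.to_nat (Z.abs k)). intros n Hn.
    unfold R_dist, symsum.
    destruct (symsum_term g n k ltac:(lia)) as [Hi Ei].
    rewrite Hk in Ei.
    rewrite (sum_single (fun i => g (Z.of_nat i - Z.of_nat n)%Z) _ _ Hi Ei);
      [rewrite Rminus_diag_eq, Rabs_R0; auto|].
    intros i _ Hne. destruct (H01 (Z.of_nat i - Z.of_nat n)%Z) as [E|E]; [exact E|].
    exfalso. apply Hne. apply Huniq in E. lia.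
Qed.

Lemma cesaro_eventually g C K : (forall k, (K <= k)%nat -> g k = C) -> Un_cv (cesaro g) C.
Proof.
  intros HK eps He.
  assert (Hsplit : forall n, sum_f_R0 g n = sum_f_R0 (fun k => g k - C) n + INR (S n) * C).
  { induction n; simpl; [lra|]. rewrite IHn. destruct n; simpl; lra. }
  set (B := sum_f_R0 (fun k => g k - C) K).
  assert (HB : forall n, (K <= n)%nat -> sum_f_R0 (fun k => g k - C) n = B).
  { intros n Hn. induction Hn; [reflexivity|]. simpl. rewrite IHHn, HK by lia. lra. }
  destruct (archimed (Rabs B / eps)) as [Hup _].
  exists (K + Z.to_nat (up (Rabs B / eps)))%nat. intros n Hn. unfold R_dist, cesaro.
  rewrite Hsplit, HB by lia.
  assert (HS : 0 < INR (S n)) by (apply lt_0_INR; lia).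
  replace ((B + INR (S n) * C) / INR (S n) - C) with (B / INR (S n)) by (field; lra).
  assert (Hlarge : Rabs B / eps < INR (S n)).
  { assert (IZR (up (Rabs B / eps)) <= INR n).
    { destruct (Z_le_gt_dec (up (Rabs B / eps)) 0) as [Hl|Hl].
      - apply IZR_le in Hl. pose proof (pos_INR n). lra.
      - rewrite <- (Z2Nat.id (up (Rabs B / eps))) by lia. rewrite <- INR_IZR_INZ.
        apply le_INR. lia. }
    rewrite S_INR. lra. }
  unfold Rdiv. rewrite Rabs_mult, Rabs_inv, (Rabs_pos_eq (INR (S n))) by lra.
  apply (Rmult_lt_reg_r (INR (S n))); [lra|].
  rewrite Rmult_assoc, Rinv_l, Rmult_1_r by lra.
  apply (Rmult_lt_reg_r (/ eps)); [apply Rinv_0_lt_compat; lra|].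
  replace (eps * INR (S n) * / eps) with (INR (S n)) by (field; lra). exact Hlarge.
Qed.

Lemma cesaro_pair_bound g B l : (forall k, g k + g (S k) <= B) ->
  Un_cv (cesaro g) l -> l <= B / 2.
Proof.
  intros Hpair Hcv.
  assert (Hsum : forall m, sum_f_R0 g (2 * m + 1) <= INR (S m) * B).
  { induction m.
    - simpl. pose proof (Hpair 0%nat). lra.
    - replace (2 * S m + 1)%nat with (S (S (2 * m + 1))) by lia.
      rewrite !tech5, S_INR. pose proof (Hpair (S (2 * m + 1))). lra. }
  destruct (Rle_or_lt l (B / 2)) as [Hl|Hl]; [exact Hl|exfalso].
  destruct (Hcv (l - B / 2) ltac:(lra)) as [N HN].
  specialize (HN (2 * N + 1)%nat ltac:(lia)). unfold R_dist, cesaro in HN.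
  apply Rabs_def2 in HN.
  assert (HP : 0 < INR (S N)) by (apply lt_0_INR; lia).
  replace (INR (S (2 * N + 1))) with (2 * INR (S N)) in HN
    by (replace (S (2 * N + 1)) with (2 * S N)%nat by lia; rewrite mult_INR; simpl; ring).
  assert (sum_f_R0 g (2 * N + 1) / (2 * INR (S N)) <= B / 2).
  { apply (Rmult_le_reg_r (2 * INR (S N))); [lra|].
    replace (sum_f_R0 g (2 * N + 1) / (2 * INR (S N)) * (2 * INR (S N)))
      with (sum_f_R0 g (2 * N + 1)) by (field; lra).
    specialize (Hsum N). nra. }
  lra.
Qed.

Lemma close_pair (r : nat -> R) lo hi eps M : 0 < eps -> (forall n, lo <= r n <= hi) ->
  exists n m, (M <= n < m)%nat /\ Rabs (r m - r n) < eps.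
Proof.
  intros He Hr.
  destruct (Bolzano_Weierstrass r _ (compact_P3 lo hi) Hr) as [l Hl].
  set (ball := disc l (mkposreal (eps / 2) ltac:(lra))).
  assert (Hnb : neighbourhood ball l)
    by (exists (mkposreal (eps / 2) ltac:(lra)); intros y Hy; exact Hy).
  destruct (Hl ball M Hnb) as [n [Hn Bn]].
  destruct (Hl ball (S n) Hnb) as [m [Hm Bm]].
  exists n, m. split; [lia|]. unfold ball, disc in Bn, Bm. simpl in Bn, Bm.
  apply Rabs_def2 in Bn, Bm. apply Rabs_def1; lra.
Qed.

Lemma bool_recurrence (P : R -> nat -> Prop) (B : nat -> bool) :
  (forall e e' n, e <= e' -> P e n -> P e' n) ->
  (forall e, 0 < e -> forall M, exists n, (M <= n)%nat /\ P e n) ->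
  exists beta, forall e, 0 < e -> forall M, exists n, (M <= n)%nat /\ P e n /\ B n = beta.
Proof.
  intros Hmono HP. apply NNPP. intros Hno.
  assert (Hfail : forall beta, exists e M, 0 < e /\
            forall n, (M <= n)%nat -> P e n -> B n <> beta).
  { intros beta. apply NNPP. intros Hb. apply Hno. exists beta. intros e He M.
    apply NNPP. intros Hn. apply Hb. exists e, M. split; [exact He|].
    intros n HMn HPn HBn. apply Hn. eauto. }
  destruct (Hfail true) as [e1 [M1 [He1 H1]]].
  destruct (Hfail false) as [e2 [M2 [He2 H2]]].
  destruct (HP (Rmin e1 e2) ltac:(apply Rmin_glb_lt; auto) (M1 + M2)%nat) as [n [Hn HPn]].
  destruct (B n) eqn:EB.
  - apply (H1 n ltac:(lia)); [apply (Hmono _ _ _ (Rmin_l e1 e2) HPn)| exact EB].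
  - apply (H2 n ltac:(lia)); [apply (Hmono _ _ _ (Rmin_r e1 e2) HPn)| exact EB].
Qed.

Lemma uniform_bound (l : list R) (P : R -> R -> nat -> Prop) :
  (forall x e e' M M', 0 < e <= e' -> (M' <= M)%nat -> P x e' M' -> P x e M) ->
  (forall x, In x l -> exists e M, 0 < e /\ P x e M) ->
  exists e M, 0 < e /\ forall x, In x l -> P x e M.
Proof.
  intros Hmono. induction l as [|x0 l IH]; intros Hl.
  - exists 1, 0%nat. split; [lra| intros x []].
  - destruct (Hl x0 (or_introl eq_refl)) as [e0 [M0 [He0 HP0]]].
    destruct IH as [e1 [M1 [He1 HP1]]]; [intros x Hx; apply Hl; right; exact Hx|].
    exists (Rmin e0 e1), (M0 + M1)%nat. split; [apply Rmin_glb_lt; auto|].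
    assert (0 < Rmin e0 e1) by (apply Rmin_glb_lt; auto).
    intros x [<-|Hx].
    + apply (Hmono _ _ e0 _ M0); [split; [lra| apply Rmin_l]| lia| exact HP0].
    + apply (Hmono _ _ e1 _ M1); [split; [lra| apply Rmin_r]| lia| apply HP1, Hx].
Qed.

Lemma iterate_shift (r : nat -> R) n m D : (n <= m)%nat ->
  (forall j, r (m + j)%nat = r (n + j)%nat + D) ->
  forall i, r (n + i * (m - n))%nat = r n + INR i * D.
Proof.
  intros Hnm HD i. induction i as [|i IH]; [rewrite Nat.mul_0_l, Nat.add_0_r; simpl; ring|].
  replace (n + S i * (m - n))%nat with (m + i * (m - n))%nat by nia.
  rewrite HD, IH, S_INR. ring.
Qed.

Lemma bounded_drift_zero u D h : (forall i, 0 <= u + INR i * D < h) -> D = 0.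
Proof.
  intros Hb. apply NNPP. intros HD.
  pose proof (Hb 0%nat) as H0. simpl in H0.
  assert (HDa : 0 < Rabs D) by (apply Rabs_pos_lt; exact HD).
  destruct (archimed (h / Rabs D)) as [Hup _].
  set (i := Z.to_nat (up (h / Rabs D))).
  assert (Hi : h < INR i * Rabs D).
  { assert (h / Rabs D < INR i).
    { unfold i. destruct (Z_le_gt_dec (up (h / Rabs D)) 0) as [Hl|Hl].
      - apply IZR_le in Hl. assert (0 < h / Rabs D) by (apply Rdiv_lt_0_compat; lra). lra.
      - rewrite INR_IZR_INZ, Z2Nat.id by lia. exact Hup. }
    apply (Rmult_lt_reg_r (/ Rabs D)); [apply Rinv_0_lt_compat; lra|].
    replace (INR i * Rabs D * / Rabs D) with (INR i) by (field; lra). lra. }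
  pose proof (Hb i) as Hi'. pose proof (pos_INR i).
  destruct (Rle_or_lt 0 D).
  - rewrite Rabs_pos_eq in Hi by lra. nra.
  - rewrite Rabs_left in Hi by lra. nra.
Qed.

Lemma bi_orbit {X : Type} (f : X -> X) (A : X -> Prop) (p : X) :
  (forall u, A u -> A (f u)) -> (forall u, A u -> exists v, A v /\ f v = u) -> A p ->
  exists y : Z -> X, y 0%Z = p /\ forall z, A (y z) /\ f (y z) = y (z + 1)%Z.
Proof.
  intros Hfwd Hbwd Hp.
  set (pred u := epsilon (inhabits p) (fun v => A v /\ f v = u)).
  assert (Hpred : forall u, A u -> A (pred u) /\ f (pred u) = u)
    by (intros u Hu; exact (epsilon_spec (inhabits p) _ (Hbwd u Hu))).
  assert (Hback : forall n, A (Nat.iter n pred p))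
    by (induction n; simpl; [exact Hp| apply Hpred, IHn]).
  assert (Hforw : forall n, A (Nat.iter n f p))
    by (induction n; simpl; [exact Hp| apply Hfwd, IHn]).
  exists (fun z => if Z_le_dec 0 z then Nat.iter (Z.to_nat z) f p
                   else Nat.iter (Z.to_nat (- z)) pred p).
  split; [reflexivity|]. intros z.
  destruct (Z_le_dec 0 z), (Z_le_dec 0 (z + 1)); try lia.
  - split; [apply Hforw|]. replace (Z.to_nat (z + 1)) with (S (Z.to_nat z)) by lia. reflexivity.
  - replace z with (-1)%Z by lia. simpl. split; [apply Hpred, Hp| apply Hpred, Hp].
  - replace (Z.to_nat (- z)) with (S (Z.to_nat (- (z + 1)))) by lia.
    split; [apply Hback|]. simpl. apply Hpred, Hback.
Qed.

Lemma Z_antiderivative (d : Z -> Z) :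
  exists K : Z -> Z, K 0%Z = 0%Z /\ forall z, K (z + 1)%Z = (K z + d z)%Z.
Proof.
  set (up := fix up n := match n with O => 0%Z | S n => (up n + d (Z.of_nat n))%Z end).
  set (down := fix down n := match n with
                 O => 0%Z | S n => (down n + d (- Z.of_nat (S n)))%Z end).
  exists (fun z => if Z_le_dec 0 z then up (Z.to_nat z) else (- down (Z.to_nat (- z)))%Z).
  split; [reflexivity|]. intros z.
  destruct (Z_le_dec 0 z), (Z_le_dec 0 (z + 1)); try lia.
  - replace (Z.to_nat (z + 1)) with (S (Z.to_nat z)) by lia. simpl.
    rewrite Z2Nat.id by lia. reflexivity.
  - replace z with (-1)%Z by lia. simpl. lia.
  - replace (Z.to_nat (- z)) with (S (Z.to_nat (- (z + 1)))) by lia.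
    set (n' := Z.to_nat (- (z + 1))).
    change (down (S n')) with (down n' + d (- Z.of_nat (S n')))%Z.
    replace (- Z.of_nat (S n'))%Z with z by (unfold n'; lia). lia.
Qed.

Lemma increasing_blocks (f : Z -> Z) : (forall z, (f z < f (z + 1))%Z) ->
  forall m, exists! z, (f (z - 1) < m <= f z)%Z.
Proof.
  intros Hf.
  assert (Hgrow : forall (n : nat) z, (f z + Z.of_nat n <= f (z + Z.of_nat n))%Z).
  { induction n as [|n IH]; intros z; [rewrite !Z.add_0_r; lia|].
    specialize (IH z). specialize (Hf (z + Z.of_nat n)%Z).
    replace (z + Z.of_nat (S n))%Z with (z + Z.of_nat n + 1)%Z by lia. lia. }
  assert (Hmono : forall z z', (z <= z')%Z -> (f z <= f z')%Z).
  { intros z z' Hz. pose proof (Hgrow (Z.to_nat (z' - z)) z).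
    replace (z + Z.of_nat (Z.to_nat (z' - z)))%Z with z' in H by lia. lia. }
  assert (Hcross : forall (n : nat) z0 m, (f z0 < m <= f (z0 + Z.of_nat n))%Z ->
            exists z, (f (z - 1) < m <= f z)%Z).
  { induction n as [|n IH]; intros z0 m Hm; [rewrite Z.add_0_r in Hm; lia|].
    destruct (Z_le_gt_dec m (f (z0 + Z.of_nat n))%Z) as [Hl|Hl]; [apply (IH z0); lia|].
    exists (z0 + Z.of_nat (S n))%Z.
    replace (z0 + Z.of_nat (S n) - 1)%Z with (z0 + Z.of_nat n)%Z by lia. lia. }
  intros m.
  set (z0 := (- Z.of_nat (Z.to_nat (f 0%Z - m + 1)))%Z).
  assert (Hz0 : (f z0 < m)%Z).
  { pose proof (Hgrow (Z.to_nat (f 0%Z - m + 1)) z0). unfold z0 in *.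
    rewrite Z.add_opp_diag_l in H. lia. }
  destruct (Hcross (Z.to_nat (m - f z0)) z0 m) as [z Hz].
  { pose proof (Hgrow (Z.to_nat (m - f z0)) z0). lia. }
  exists z. split; [exact Hz|]. intros z' Hz'.
  destruct (Z.lt_trichotomy z z') as [L|[L|L]]; [|exact L|];
    [pose proof (Hmono z (z' - 1)%Z ltac:(lia))| pose proof (Hmono z' (z - 1)%Z ltac:(lia))]; lia.
Qed.

Lemma cos_lt_1 y : 0 < y < 2 * PI -> cos y < 1.
Proof.
  intros [H1 H2]. replace y with (2 * (y / 2)) by field.
  rewrite cos_2a_sin. assert (0 < sin (y / 2)) by (apply sin_gt_0; lra). nra.
Qed.

Lemma cos_close A B k : 0 <= k -> k < cos A -> k < cos B -> 2 * k * k - 1 < cos (B - A).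
Proof.
  intros Hk HA HB. rewrite cos_minus.
  pose proof (sin2_cos2 A) as EA. pose proof (sin2_cos2 B) as EB. unfold Rsqr in EA, EB.
  destruct (COS_bound A), (COS_bound B).
  assert (PA : sin A * sin A <= 1 - k * k) by nra.
  assert (PB : sin B * sin B <= 1 - k * k) by nra.
  assert (Hprod : (sin B * sin A) * (sin B * sin A) <= (1 - k * k) * (1 - k * k)).
  { replace ((sin B * sin A) * (sin B * sin A)) with ((sin B * sin B) * (sin A * sin A)) by ring.
    apply Rmult_le_compat; nra. }
  assert (- (1 - k * k) <= sin B * sin A) by nra.
  assert (k * k < cos B * cos A) by nra.
  lra.
Qed.

(** * Solutions of [M x = 1] as tilings *)

Lemma chi0c_01 c x : chi0c c x = 0 \/ chi0c c x = 1.
Proof. unfold chi0c. destruct (Rle_dec 0 x), (Rlt_dec x c); auto. Qed.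

Lemma Mentry_one a b c t m k :
  Mentry a b c t m k = 1 <-> a * IZR m <= t + b * IZR k < a * IZR m + c.
Proof.
  unfold Mentry, chi0c.
  destruct (Rle_dec 0 (t - a * IZR m + b * IZR k)), (Rlt_dec (t - a * IZR m + b * IZR k) c);
    split; intros; lra.
Qed.

(* [x] solves [M x = 1] iff every window [[a m, a m + c)] contains exactly one of
   the selected points [t + b k], [x k = 1]. *)
Definition tiling a b c t (x : Z -> R) : Prop :=
  forall m, exists! k, Mentry a b c t m k = 1 /\ x k = 1.

Lemma in_S_tiling a b c t : in_S a b c t <-> exists x, in_B0 x /\ tiling a b c t x.
Proof.
  assert (Hrow : forall x m, in_B0 x ->
            (Mapply_eq a b c t x m 1 <-> exists! k, Mentry a b c t m k = 1 /\ x k = 1)).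
  { intros x m [H01 _].
    assert (Hprod : forall k, Mentry a b c t m k * x k = 1 <-> Mentry a b c t m k = 1 /\ x k = 1).
    { intros k. unfold Mentry. destruct (chi0c_01 c (t - a * IZR m + b * IZR k)) as [E|E];
        rewrite E; destruct (H01 k) as [F|F]; rewrite F; split; intros; lra. }
    unfold Mapply_eq. rewrite symsum_cv_one.
    - split; intros [k [Hk Hu]]; exists k; split;
        try (apply Hprod; exact Hk); intros k' Hk'; apply Hu, Hprod, Hk'.
    - intros k. unfold Mentry. destruct (chi0c_01 c (t - a * IZR m + b * IZR k)) as [E|E];
        rewrite E; destruct (H01 k) as [F|F]; rewrite F; lra. }
  split.
  - intros [x [Hx HM]]. exists x. split; [exact Hx|]. intros m. apply Hrow, HM. exact Hx.
  - intros [x [Hx HT]]. exists x. split; [exact Hx|]. intros m. apply Hrow; [exact Hx| apply HT].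
Qed.

Section Model.
Variables a b c : R.
Hypothesis a_pos : 0 < a.
Hypothesis b_pos : 0 < b.
Hypothesis c_pos : 0 < c.
Hypothesis a_lt_b : a < b.
Hypothesis b_lt_c : b < c.
Hypothesis c0_gt : b - a < c0 b c.
Hypothesis c0_lt : c0 b c < a.

Let q := Rfloor (c / b).
Let lo := c0 b c + a - b.

Lemma c_decomp : c = IZR q * b + c0 b c.
Proof. unfold q, c0. ring. Qed.

Lemma q_nonneg : (0 <= q)%Z.
Proof. apply Rfloor_nonneg. apply Rmult_le_pos; [lra| left; apply Rinv_0_lt_compat; lra]. Qed.

(* [R_{a,b,c}] fixes the points whose residue lies in the window [[lo, c0)]; elsewhere
   it translates by one of the two steps [q b + b] (below [lo]) or [q b] (above [c0]). *)
Definition stuck u := lo <= u < c0 b c.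
Definition free u := 0 <= u < a /\ ~ stuck u.

Definition long_step := IZR q * b + b.
Definition short_step := IZR q * b.
Definition is_long u : bool := if Rlt_dec u lo then true else false.
Definition step u := if is_long u then long_step else short_step.
Definition step_mult u : Z := if is_long u then (q + 1)%Z else q.

Definition red u := modR a (u + step u).

Lemma step_mult_spec u : step u = IZR (step_mult u) * b.
Proof.
  unfold step, step_mult, long_step, short_step.
  destruct (is_long u); [rewrite plus_IZR; simpl|]; ring.
Qed.

Lemma step_cases u : step u = long_step \/ step u = short_step.
Proof. unfold step. destruct (is_long u); auto. Qed.

Lemma Rmap_stuck z : stuck (modR a z) -> Rmap a b c z = z.
Proof.
  intros H. unfold Rmap, stuck in *. fold lo.
  destruct (Rlt_dec (modR a z) lo); [lra|].
  destruct (Rlt_dec (modR a z) (c0 b c)); [reflexivity| lra].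
Qed.

Lemma Rmap_free z : ~ stuck (modR a z) -> Rmap a b c z = z + step (modR a z).
Proof.
  intros H. unfold Rmap, step, is_long, long_step, short_step, stuck in *. fold lo q.
  destruct (Rlt_dec (modR a z) lo); [ring|].
  destruct (Rlt_dec (modR a z) (c0 b c)); [exfalso; apply H; lra| ring].
Qed.

Lemma modR_Rmap z : ~ stuck (modR a z) -> modR a (Rmap a b c z) = red (modR a z).
Proof.
  intros H. rewrite Rmap_free by exact H. unfold red.
  destruct (modR_spec a a_pos z) as [_ E].
  rewrite E at 1.
  replace (modR a z + a * IZR (Rfloor (z / a)) + step (modR a z))
    with (modR a z + step (modR a z) + a * IZR (Rfloor (z / a))) by ring.
  apply modR_shift, a_pos.
Qed.

(* Key arithmetic fact: the only multiple of [b] carrying a point of residue [u]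
   into the next window [[c - u, c - u + a)] is the step of [u]; for stuck [u]
   there is none. *)
Lemma step_unique u n : 0 <= u < a -> c - u <= IZR n * b < c - u + a ->
  ~ stuck u /\ IZR n * b = step u.
Proof.
  intros Hu Hn. rewrite c_decomp in Hn.
  assert (Hd : c0 b c - u <= IZR (n - q) * b < c0 b c - u + a)
    by (rewrite minus_IZR, Rmult_minus_distr_r; lra).
  assert (Hlow : (-1 < n - q)%Z).
  { apply lt_IZR. destruct (Rle_or_lt (IZR (n - q)) (-1)) as [Hl|Hl]; [|exact Hl].
    assert (IZR (n - q) * b <= - b) by nra. lra. }
  assert (Hhigh : (n - q < 2)%Z).
  { apply lt_IZR. destruct (Rle_or_lt 2 (IZR (n - q))) as [Hl|Hl]; [|exact Hl].
    assert (2 * b <= IZR (n - q) * b) by nra. lra. }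
  assert (Hn' : n = q \/ n = (q + 1)%Z) by lia.
  unfold stuck, step, is_long, long_step, short_step. unfold lo in *.
  destruct Hn' as [->| ->].
  -
    rewrite Z.sub_diag in Hd. simpl in Hd.
    destruct (Rlt_dec u (c0 b c + a - b)); split; lra.
  -
    replace (q + 1 - q)%Z with 1%Z in Hd by ring. simpl in Hd. rewrite plus_IZR.
    destruct (Rlt_dec u (c0 b c + a - b)); split; lra.
Qed.

Lemma free_window y : free y -> c <= y + step y < c + a.
Proof.
  intros [Hy Hs]. rewrite c_decomp. unfold stuck, step, is_long, long_step, short_step in *.
  destruct (Rlt_dec y lo); unfold lo in *; split; lra.
Qed.

(** * Points of [S] have orbits that never get stuck *)

Section Tiling.
Variable t : R.
Variable x : Z -> R.
Hypothesis x_tiles : tiling a b c t x.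

Lemma tiling_step j : x j = 1 ->
  ~ stuck (modR a (t + b * IZR j)) /\
  exists j', x j' = 1 /\ t + b * IZR j' = t + b * IZR j + step (modR a (t + b * IZR j)).
Proof.
  intros Hxj.
  set (w := t + b * IZR j). set (u := modR a w). set (K := Rfloor (w / a)).
  destruct (modR_spec a a_pos w) as [Hu Ew]. fold u K in Hu, Ew.
  assert (HK : Mentry a b c t K j = 1) by (apply Mentry_one; fold w; lra).
  destruct (x_tiles (K + 1)%Z) as [j' [[HK' Hxj'] _]].
  apply Mentry_one in HK'. rewrite plus_IZR in HK'.
  assert (Hfar : a * IZR K + c <= t + b * IZR j').
  { destruct (Rle_or_lt (a * IZR K + c) (t + b * IZR j')) as [Hl|Hl]; [exact Hl|exfalso].
    assert (HK'' : Mentry a b c t K j' = 1) by (apply Mentry_one; nra).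
    destruct (x_tiles K) as [j0 [_ Hu0]].
    assert (j = j') as <- by (rewrite <- (Hu0 j), <- (Hu0 j'); auto).
    fold w in HK'. lra. }
  destruct (step_unique u (j' - j) Hu) as [Hfree Hstep].
  { rewrite minus_IZR. unfold w in Ew. split; nra. }
  split; [exact Hfree|]. exists j'. split; [exact Hxj'|]. fold w u.
  rewrite <- Hstep, minus_IZR. unfold w. ring.
Qed.

Lemma tiling_orbit : in_B0 x -> forall k, exists j, x j = 1 /\
  Nat.iter k (Rmap a b c) t = t + b * IZR j.
Proof.
  intros [_ Hx0] k. induction k as [|k [j [Hxj Ej]]].
  - exists 0%Z. split; [exact Hx0| simpl; ring].
  - destruct (tiling_step j Hxj) as [Hfree [j' [Hxj' Ej']]].
    exists j'. split; [exact Hxj'|]. simpl. rewrite Ej, Rmap_free by exact Hfree.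
    symmetry. exact Ej'.
Qed.

End Tiling.

Lemma S_orbit_free t : in_S a b c t -> forall k, ~ stuck (modR a (Nat.iter k (Rmap a b c) t)).
Proof.
  intros HS k. apply in_S_tiling in HS. destruct HS as [x [Hx HT]].
  destruct (tiling_orbit t x HT Hx k) as [j [Hxj ->]].
  apply (tiling_step t x HT j Hxj).
Qed.

(** * The residue map is a piecewise translation *)

(* [red] is a translation between consecutive cut points: [lo], where the step
   changes, and the points [cut s] where [u + s] crosses a multiple of [a]. *)
Definition cut s := a * IZR (Rfloor (s / a) + 1) - s.
Definition cuts := lo :: cut long_step :: cut short_step :: nil.
Definition no_cut x x' := forall k, In k cuts -> ~ (x < k <= x').

Lemma floor_div x n : IZR n * a <= x < (IZR n + 1) * a -> Rfloor (x / a) = n.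
Proof.
  intros [H1 H2]. apply Rfloor_unique.
  assert (E : x / a * a = x) by (field; lra).
  split; [apply (Rmult_le_reg_r a)| apply (Rmult_lt_reg_r a)]; lra.
Qed.

Lemma floor_jump s x x' : 0 <= x -> x' < a -> x < x' ->
  Rfloor ((x + s) / a) <> Rfloor ((x' + s) / a) -> x < cut s <= x'.
Proof.
  intros H0 H1 H2 Hne. unfold cut. rewrite plus_IZR. simpl.
  set (phi := Rfloor (s / a)).
  assert (Hs : IZR phi * a <= s < (IZR phi + 1) * a).
  { destruct (Rfloor_spec (s / a)) as [A B]. fold phi in A, B.
    assert (E : s / a * a = s) by (field; lra). split; nra. }
  destruct (Rlt_or_le x' (a * (IZR phi + 1) - s)) as [Hl|Hl].
  - exfalso. apply Hne. rewrite (floor_div (x + s) phi), (floor_div (x' + s) phi);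
      auto; split; nra.
  - destruct (Rlt_or_le x (a * (IZR phi + 1) - s)) as [Hl2|Hl2]; [split; auto|].
    exfalso. apply Hne.
    rewrite (floor_div (x + s) (phi + 1)), (floor_div (x' + s) (phi + 1));
      auto; rewrite plus_IZR; simpl; split; nra.
Qed.

Lemma is_long_no_cut x x' : x <= x' -> no_cut x x' -> is_long x = is_long x'.
Proof.
  intros Hle Hnc. unfold is_long.
  destruct (Rlt_dec x lo), (Rlt_dec x' lo); try reflexivity; [|lra].
  exfalso. apply (Hnc lo); [left; reflexivity| lra].
Qed.

Lemma red_translate x x' : free x -> free x' -> x <= x' -> no_cut x x' ->
  red x' = red x + (x' - x).
Proof.
  intros [Hx _] [Hx' _] Hle Hnc.
  destruct (Req_dec x x') as [<-|Hne]; [ring|].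
  assert (Hstep : step x = step x') by (unfold step; rewrite (is_long_no_cut x x'); auto).
  assert (Hfl : Rfloor ((x + step x) / a) = Rfloor ((x' + step x) / a)).
  { destruct (Z.eq_dec (Rfloor ((x + step x) / a)) (Rfloor ((x' + step x) / a))) as [E|E];
      [exact E| exfalso].
    apply floor_jump in E; try lra.
    unfold step in E. destruct (is_long x).
    - apply (Hnc (cut long_step)); [right; left; reflexivity| exact E].
    - apply (Hnc (cut short_step)); [right; right; left; reflexivity| exact E]. }
  unfold red, modR. rewrite <- Hstep, <- Hfl. ring.
Qed.

Lemma right_gap p : exists d, 0 < d /\ forall x, p <= x < p + d -> no_cut p x.
Proof.
  destruct (uniform_bound cuts (fun k d (_ : nat) => forall x, p <= x < p + d -> ~ (p < k <= x)))
    as [d [_ [Hd Hgap]]].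
  - intros k e e' M M' He _ H x Hx. apply H. lra.
  - intros k _. exists (if Rlt_dec p k then k - p else 1), 0%nat.
    destruct (Rlt_dec p k); split; try lra; intros x Hx Hk; lra.
  - exists d. split; [exact Hd|]. intros x Hx k Hk. apply (Hgap k Hk x Hx).
Qed.

(** * Right-recurrent points of a free residue orbit *)

Section Recurrence.
Variable r : nat -> R.
Hypothesis r_free : forall n, free (r n).
Hypothesis r_step : forall n, r (S n) = red (r n).

Definition recurrent p :=
  forall eps, 0 < eps -> forall M, exists n, (M <= n)%nat /\ p <= r n < p + eps.

Lemma drift_constant eps M n m :
  (forall k x, (M <= k)%nat -> x <= r k -> r k - x < eps -> no_cut x (r k)) ->
  (M <= n)%nat -> (M <= m)%nat -> Rabs (r m - r n) < eps ->
  forall j, r (m + j)%nat = r (n + j)%nat + (r m - r n).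
Proof.
  intros Hlate Hn Hm Hd j. apply Rabs_def2 in Hd.
  induction j as [|j IH]; [rewrite !Nat.add_0_r; ring|].
  rewrite !Nat.add_succ_r, !r_step.
  destruct (Rle_or_lt 0 (r m - r n)) as [Dp|Dn].
  - assert (Hnc : no_cut (r (n + j)%nat) (r (m + j)%nat))
      by (apply Hlate; [lia| |]; rewrite IH; lra).
    rewrite (red_translate (r (n + j)%nat) (r (m + j)%nat)) by (auto; rewrite IH; lra).
    rewrite IH. ring.
  - assert (Hnc : no_cut (r (m + j)%nat) (r (n + j)%nat))
      by (apply Hlate; [lia| |]; rewrite IH; lra).
    rewrite (red_translate (r (m + j)%nat) (r (n + j)%nat)) by (auto; rewrite IH; lra).
    rewrite IH. ring.
Qed.

(* Otherwise late orbit points avoid a right neighbourhood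
   of every cut; two late points closer than its width then never get separated by a
   cut, so their gap is preserved forever, hence zero, and the orbit is periodic. *)
Lemma recurrent_exists : exists p, recurrent p.
Proof.
  apply NNPP. intros Hnone.
  destruct (uniform_bound cuts (fun k e M => forall n, (M <= n)%nat -> ~ (k <= r n < k + e)))
    as [eps [M [Heps Havoid]]].
  - intros k e e' M M' He HM H n Hn Hk. apply (H n); [lia| lra].
  - intros k _. apply NNPP. intros Hk. apply Hnone. exists k. intros e He M.
    apply NNPP. intros HeM. apply Hk. exists e, M. split; [exact He|].
    intros n Hn Hin. apply HeM. exists n. auto.
  - assert (Hlate : forall k x, (M <= k)%nat -> x <= r k -> r k - x < eps -> no_cut x (r k)).
    { intros k x Hk Hx Hd cp Hcp Hb. apply (Havoid cp Hcp k Hk). lra. }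
    destruct (close_pair r 0 a eps M Heps (fun n => ltac:(destruct (r_free n) as [[] _]; lra)))
      as [n [m [Hnm Hd]]].
    pose proof (drift_constant eps M n m Hlate ltac:(lia) ltac:(lia) Hd) as Hdrift.
    pose proof (iterate_shift r n m _ ltac:(lia) Hdrift) as Hiter.
    assert (HD : r m - r n = 0).
    { apply (bounded_drift_zero (r n) _ a). intros i. rewrite <- Hiter. apply r_free. }
    apply Hnone. exists (r n). intros e He M'. exists (n + M' * (m - n))%nat.
    split; [nia|]. rewrite Hiter, HD. lra.
Qed.

(* Recurrent points are free residues, as limits from the right of free residues. *)
Lemma recurrent_free p : recurrent p -> free p.
Proof.
  intros H. split; [split|].
  - destruct (Rle_or_lt 0 p) as [|Hp]; [assumption| exfalso].
    destruct (H (- p) ltac:(lra) 0%nat) as [n [_ Hn]]. destruct (r_free n) as [[] _]. lra.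
  - destruct (H 1 ltac:(lra) 0%nat) as [n [_ Hn]]. destruct (r_free n) as [[] _]. lra.
  - intros Hs. destruct (H (c0 b c - p) ltac:(unfold stuck in Hs; lra) 0%nat) as [n [_ Hn]].
    destruct (r_free n) as [_ Hns]. apply Hns. unfold stuck in *. lra.
Qed.

(* [red] maps recurrent points to recurrent points, being a translation just right of [p]. *)
Lemma recurrent_red p : recurrent p -> recurrent (red p).
Proof.
  intros H eps He M.
  destruct (right_gap p) as [d [Hd Hgap]].
  destruct (H (Rmin eps d) ltac:(apply Rmin_glb_lt; lra) M) as [n [Hn Hrn]].
  pose proof (Rmin_l eps d). pose proof (Rmin_r eps d).
  exists (S n). split; [lia|].
  rewrite r_step, (red_translate p (r n)); try lra;
    [apply recurrent_free, H| apply r_free| apply Hgap; lra].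
Qed.

(* Every recurrent point has a recurrent preimage: follow the branch of [red]
   (long or short step) used infinitely often by the orbit near it. *)
Lemma recurrent_preimage p : recurrent p -> exists p', recurrent p' /\ red p' = p.
Proof.
  intros H. destruct (recurrent_free p H) as [[Hp0 Hpa] _].
  destruct (bool_recurrence (fun e n => p <= r (S n) < p + e) (fun n => is_long (r n)))
    as [beta Hbeta].
  - intros e e' n He Hn. lra.
  - intros e He M. destruct (H e He (S M)) as [[|n] [Hn Hrn]]; [lia|].
    exists n. split; [lia| exact Hrn].
  - set (s := if beta then long_step else short_step).
    assert (Hs : forall u, is_long u = beta -> step u = s)
      by (intros u Hu; unfold step; rewrite Hu; reflexivity).
    set (p' := modR a (p - s)).
    destruct (modR_spec a a_pos (p - s)) as [Hp' Ep']. fold p' in Hp', Ep'.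
    assert (Hpre : forall n, is_long (r n) = beta -> p <= r (S n) -> r (S n) - p < a - p' ->
                     r n = p' + (r (S n) - p)).
    { intros n Hb H1 H2. destruct (r_free n) as [Hrn _].
      destruct (modR_spec a a_pos (r n + s)) as [_ Er].
      rewrite r_step in *. unfold red in *. rewrite Hs in * by exact Hb.
      apply (residue_eq a a_pos _ _ (Rfloor ((r n + s) / a) + Rfloor ((p - s) / a)));
        [exact Hrn| lra| rewrite plus_IZR; lra]. }
    assert (Hrec : recurrent p').
    { intros e He M.
      destruct (Hbeta (Rmin e (a - p')) ltac:(apply Rmin_glb_lt; lra) M) as [n [Hn [Hrn Hb]]].
      pose proof (Rmin_l e (a - p')). pose proof (Rmin_r e (a - p')).
      exists n. split; [exact Hn|]. rewrite (Hpre n) by (auto; lra). lra. }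
    exists p'. split; [exact Hrec|].
    destruct (right_gap p') as [d [Hd Hgap]].
    destruct (Hbeta (Rmin d (a - p')) ltac:(apply Rmin_glb_lt; lra) 0%nat) as [n [_ [Hrn Hb]]].
    pose proof (Rmin_l d (a - p')). pose proof (Rmin_r d (a - p')).
    rewrite (Hpre n) in Hb by (auto; lra).
    rewrite <- (is_long_no_cut p') in Hb by (try apply Hgap; lra).
    unfold red. rewrite Hs by exact Hb.
    apply (modR_charac a a_pos _ p (- Rfloor ((p - s) / a))); [lra| rewrite opp_IZR; lra].
Qed.

End Recurrence.

(** * A bi-infinite free residue orbit yields a point of [S] *)

Section Construction.
Variable y : Z -> R.
Hypothesis y_free : forall z, free (y z).
Hypothesis y_step : forall z, red (y z) = y (z + 1)%Z.
Variable k : Z -> Z.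
Hypothesis k_zero : k 0%Z = 0%Z.
Hypothesis k_step : forall z, k (z + 1)%Z = (k z + step_mult (y z))%Z.

(* The selected points [pos z = y 0 + b k z] lift the residue orbit [y]. *)
Let pos z := y 0%Z + b * IZR (k z).

Lemma pos_step z : pos (z + 1)%Z = pos z + step (y z).
Proof. unfold pos. rewrite k_step, plus_IZR, step_mult_spec. ring. Qed.

Lemma pos_residue z : exists N, pos z = y z + a * IZR N.
Proof.
  assert (Hy : forall w, y (w + 1)%Z = y w + step (y w) - a * IZR (Rfloor ((y w + step (y w)) / a)))
    by (intros w; rewrite <- y_step; unfold red, modR; ring).
  induction z using Z.peano_ind.
  - exists 0%Z. unfold pos. rewrite k_zero. simpl. ring.
  - destruct IHz as [N HN]. exists (N + Rfloor ((y z + step (y z)) / a))%Z.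
    rewrite <- Z.add_1_r, pos_step, Hy, plus_IZR, HN. ring.
  - destruct IHz as [N HN]. exists (N - Rfloor ((y (Z.pred z) + step (y (Z.pred z))) / a))%Z.
    pose proof (pos_step (Z.pred z)) as E. pose proof (Hy (Z.pred z)) as Ey.
    replace (Z.pred z + 1)%Z with z in E, Ey by lia. rewrite minus_IZR. lra.
Qed.

Let block z := Rfloor (pos z / a).

Lemma block_spec z : pos z = y z + a * IZR (block z).
Proof.
  destruct (pos_residue z) as [N HN]. destruct (y_free z) as [Hy _].
  assert (modR a (pos z) = y z) by (apply (modR_charac a a_pos _ _ N); auto).
  destruct (modR_spec a a_pos (pos z)) as [_ E]. unfold block. lra.
Qed.

Lemma next_pos z : a * IZR (block z) + c <= pos (z + 1)%Z < a * IZR (block z) + a + c.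
Proof. rewrite pos_step, block_spec. pose proof (free_window (y z) (y_free z)). lra. Qed.

Lemma block_increasing z : (block z < block (z + 1))%Z.
Proof.
  pose proof (next_pos z). pose proof (block_spec (z + 1)).
  destruct (y_free (z + 1)%Z) as [[Y0 Y1] _].
  apply lt_IZR, (Rmult_lt_reg_l a); lra.
Qed.

Lemma sees_iff_block z m : Mentry a b c (y 0%Z) m (k z) = 1 <-> (block (z - 1) < m <= block z)%Z.
Proof.
  rewrite Mentry_one. fold (pos z).
  pose proof (block_spec z). destruct (y_free z) as [[Y0 Y1] _].
  pose proof (next_pos (z - 1)) as Hprev. replace (z - 1 + 1)%Z with z in Hprev by ring.
  split.
  - intros [H1 H2]. split.
    + apply lt_IZR, (Rmult_lt_reg_l a); lra.
    + apply le_IZR. destruct (Rle_or_lt (IZR m) (IZR (block z))) as [|Hl]; [assumption| exfalso].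
      apply lt_IZR in Hl.
      assert (IZR (block z) + 1 <= IZR m) by (rewrite <- plus_IZR; apply IZR_le; lia).
      nra.
  - intros [H1 H2]. apply IZR_le in H2.
    assert (IZR (block (z - 1)) + 1 <= IZR m) by (rewrite <- plus_IZR; apply IZR_le; lia).
    split; nra.
Qed.

Lemma orbit_in_S : in_S a b c (y 0%Z).
Proof.
  apply in_S_tiling.
  set (x := fun j => if excluded_middle_informative (exists z, k z = j) then 1 else 0).
  assert (Hx : forall j, x j = 1 <-> exists z, k z = j).
  { intros j. unfold x. destruct (excluded_middle_informative _); split; intros H; auto;
      [lra| contradiction]. }
  exists x. split; [split|].
  - intros j. unfold x. destruct (excluded_middle_informative _); auto.
  - apply Hx. exists 0%Z. exact k_zero.
  - intros m. destruct (increasing_blocks block block_increasing m) as [z [Hz Hzu]].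
    exists (k z). split; [split; [apply sees_iff_block, Hz| apply Hx; eauto]|].
    intros j [Hm Hj]. apply Hx in Hj. destruct Hj as [z' <-].
    apply sees_iff_block, Hzu in Hm. subst z'. reflexivity.
Qed.

End Construction.

Lemma free_orbit_S (r : nat -> R) : (forall n, free (r n)) -> (forall n, r (S n) = red (r n)) ->
  exists p, in_S a b c p.
Proof.
  intros Hfree Hstep.
  destruct (recurrent_exists r Hfree Hstep) as [p Hp].
  destruct (bi_orbit red (recurrent r) p (recurrent_red r Hfree Hstep)
              (recurrent_preimage r Hfree Hstep) Hp) as [y [Hy0 Hy]].
  destruct (Z_antiderivative (fun z => step_mult (y z))) as [k [Hk0 Hk]].
  exists (y 0%Z).
  apply (orbit_in_S y) with (k := k); auto; intros z;
    [apply (recurrent_free r Hfree), Hy| apply Hy].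
Qed.

(** * Test functions separating a free orbit from any point *)

Hypothesis c1_pos : 0 < IZR q * b - IZR (Rfloor (IZR q * b / a)) * a.
Hypothesis c1_lt : IZR q * b - IZR (Rfloor (IZR q * b / a)) * a < 2 * a - b.

Lemma cos_non_multiple s phi rho : s = a * IZR phi + rho -> (0 <= phi)%Z -> 0 < rho < a ->
  cos (2 * PI / a * s) < 1.
Proof.
  intros E Hphi Hrho.
  replace (2 * PI / a * s) with (2 * PI / a * rho + 2 * INR (Z.to_nat phi) * PI)
    by (rewrite INR_IZR_INZ, Z2Nat.id, E by exact Hphi; field; lra).
  rewrite cos_period. apply cos_lt_1. pose proof PI_RGT_0.
  assert (0 < rho / a < 1).
  { split; [apply Rdiv_lt_0_compat; lra|].
    apply (Rmult_lt_reg_r a); [lra|]. replace (rho / a * a) with rho by (field; lra). lra. }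
  replace (2 * PI / a * rho) with (2 * PI * (rho / a)) by (field; lra). nra.
Qed.

(* Both steps are non-multiples of [a]: their residues are [c1] and [c1 + b - a]. *)
Lemma cos_steps : cos (2 * PI / a * short_step) < 1 /\ cos (2 * PI / a * long_step) < 1.
Proof.
  set (phi := Rfloor (IZR q * b / a)) in *.
  assert (Hphi : (0 <= phi)%Z).
  { apply Rfloor_nonneg. apply Rmult_le_pos; [|left; apply Rinv_0_lt_compat; lra].
    apply Rmult_le_pos; [apply IZR_le, q_nonneg| lra]. }
  split.
  - apply (cos_non_multiple _ phi (IZR q * b - IZR phi * a));
      [unfold short_step; ring| exact Hphi| lra].
  - apply (cos_non_multiple _ (phi + 1) (IZR q * b - IZR phi * a + b - a)); [|lia| lra].
    unfold long_step. rewrite plus_IZR. ring.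
Qed.

(* The threshold [kappa] is chosen so that [2 kappa^2 - 1] is the larger of the
   two cosines above. *)
Definition cos_max := Rmax (cos (2 * PI / a * long_step)) (cos (2 * PI / a * short_step)).
Definition kappa := sqrt ((1 + cos_max) / 2).

Lemma kappa_spec : 0 <= kappa < 1 /\ 2 * kappa * kappa - 1 = cos_max.
Proof.
  assert (Hmax : -1 <= cos_max < 1).
  { destruct cos_steps. pose proof (COS_bound (2 * PI / a * long_step)).
    unfold cos_max, Rmax. destruct (Rle_dec _ _); lra. }
  unfold kappa.
  assert (E : sqrt ((1 + cos_max) / 2) * sqrt ((1 + cos_max) / 2) = (1 + cos_max) / 2)
    by (apply sqrt_sqrt; lra).
  pose proof (sqrt_pos ((1 + cos_max) / 2)).
  split; [split|]; [assumption| |lra].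
  destruct (Rlt_or_le (sqrt ((1 + cos_max) / 2)) 1) as [|Hl]; [assumption| nra].
Qed.

Definition pos_part y := / 2 * (y + Rabs y).

(* The bump centred at [t0]: continuous, [a]-periodic, maximal at [t0], and too
   narrow to be positive at two points one step apart. *)
Definition bump t0 x := pos_part (cos (2 * PI / a * (x - t0)) - kappa).

Lemma bump_continuous t0 : continuity (bump t0).
Proof.
  assert (Hg : continuity (fun x => cos (2 * PI / a * (x - t0)) - kappa)) by reg.
  apply (continuity_scal _ (/ 2)), continuity_plus; [exact Hg|].
  apply (continuity_comp _ Rabs); [exact Hg| exact Rcontinuity_abs].
Qed.

Lemma bump_periodic t0 x : bump t0 (x + a) = bump t0 x.
Proof.
  unfold bump. replace (2 * PI / a * (x + a - t0)) with (2 * PI / a * (x - t0) + 2 * INR 1 * PI)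
    by (simpl; field; lra).
  rewrite cos_period. reflexivity.
Qed.

Lemma bump_center t0 : bump t0 t0 = 1 - kappa.
Proof.
  unfold bump, pos_part. replace (2 * PI / a * (t0 - t0)) with 0 by ring.
  rewrite cos_0. destruct kappa_spec. rewrite Rabs_pos_eq by lra. lra.
Qed.

Lemma bump_step t0 x : bump t0 x + bump t0 (x + step (modR a x)) <= 1 - kappa.
Proof.
  destruct kappa_spec as [[K0 K1] KE].
  assert (Hb : forall y, 0 <= bump t0 y <= 1 - kappa /\
                 (0 < bump t0 y -> kappa < cos (2 * PI / a * (y - t0)))).
  { intros y. unfold bump, pos_part. pose proof (COS_bound (2 * PI / a * (y - t0))).
    destruct (Rle_or_lt 0 (cos (2 * PI / a * (y - t0)) - kappa)).
    - rewrite Rabs_pos_eq by assumption. split; [split|]; intros; lra.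
    - rewrite Rabs_left by assumption. split; [split|]; intros; lra. }
  set (s := step (modR a x)).
  destruct (Hb x) as [[A1 A2] A3]. destruct (Hb (x + s)) as [[B1 B2] B3].
  destruct (Rlt_or_le 0 (bump t0 x)) as [Px|Px]; [|lra].
  destruct (Rlt_or_le 0 (bump t0 (x + s))) as [Py|Py]; [|lra].
  exfalso. pose proof (cos_close _ _ _ K0 (A3 Px) (B3 Py)) as T.
  replace (2 * PI / a * (x + s - t0) - 2 * PI / a * (x - t0)) with (2 * PI / a * s) in T by ring.
  rewrite KE in T. unfold cos_max in T.
  destruct (step_cases (modR a x)) as [E|E]; fold s in E; rewrite E in T;
    [pose proof (Rmax_l (cos (2 * PI / a * long_step)) (cos (2 * PI / a * short_step)))
    |pose proof (Rmax_r (cos (2 * PI / a * long_step)) (cos (2 * PI / a * short_step)))]; lra.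
Qed.

Lemma free_orbit_not_equidistributed t t0 :
  (forall k, ~ stuck (modR a (Nat.iter k (Rmap a b c) t))) ->
  exists f, cont_C f /\ periodic_C a f /\
    ~ cesaro_lim_C f (fun k => Nat.iter k (Rmap a b c) t) (f t0).
Proof.
  intros Hfree. exists (fun x => (bump t0 x, 0)). split; [|split].
  - split; [apply bump_continuous| apply continuity_const; intros ? ?; reflexivity].
  - intros x. rewrite bump_periodic. reflexivity.
  - intros [Hcv _]. simpl in Hcv. rewrite bump_center in Hcv.
    apply cesaro_pair_bound with (B := 1 - kappa) in Hcv.
    + destruct kappa_spec. lra.
    + intros k. simpl. rewrite Rmap_free by apply Hfree. apply bump_step.
Qed.

Lemma stuck_orbit_limit t K : stuck (modR a (Nat.iter K (Rmap a b c) t)) ->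
  exists t0, lo <= t0 < c0 b c /\ forall f, periodic_C a f ->
    cesaro_lim_C f (fun k => Nat.iter k (Rmap a b c) t) (f t0).
Proof.
  intros HK. set (z := Nat.iter K (Rmap a b c) t) in *.
  exists (modR a z). split; [exact HK|]. intros f Hper.
  assert (Hconst : forall k, (K <= k)%nat -> Nat.iter k (Rmap a b c) t = z).
  { intros k Hk. induction Hk; [reflexivity|]. simpl. rewrite IHHk. apply Rmap_stuck, HK. }
  rewrite <- (periodic_modR a a_pos f z Hper).
  split; apply (cesaro_eventually _ _ K); intros k Hk; rewrite Hconst by exact Hk; reflexivity.
Qed.

(* If [S] is empty, every orbit gets stuck: otherwise its residues would form a
   free orbit of [red], producing a point of [S]. *)
Lemma empty_S_limits : (forall t, ~ in_S a b c t) ->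
  forall t, exists t0, lo <= t0 < c0 b c /\ forall f, cont_C f -> periodic_C a f ->
    cesaro_lim_C f (fun k => Nat.iter k (Rmap a b c) t) (f t0).
Proof.
  intros Hempty t.
  destruct (classic (exists K, stuck (modR a (Nat.iter K (Rmap a b c) t)))) as [[K HK]|Hfree].
  - destruct (stuck_orbit_limit t K HK) as [t0 [Ht0 Hlim]]. exists t0. split; auto.
  - exfalso.
    assert (Hnot : forall k, ~ stuck (modR a (Nat.iter k (Rmap a b c) t))) by eauto.
    destruct (free_orbit_S (fun k => modR a (Nat.iter k (Rmap a b c) t))) as [p Hp].
    + intros k. split; [apply modR_spec, a_pos| apply Hnot].
    + intros k. simpl. apply modR_Rmap, Hnot.
    + exact (Hempty p Hp).
Qed.

(* Conversely, an orbit starting in [S] never gets stuck, so it has no such limit. *)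
Lemma limits_empty_S :
  (forall t, exists t0, lo <= t0 < c0 b c /\ forall f, cont_C f -> periodic_C a f ->
     cesaro_lim_C f (fun k => Nat.iter k (Rmap a b c) t) (f t0)) ->
  forall t, ~ in_S a b c t.
Proof.
  intros Hlim t HS. destruct (Hlim t) as [t0 [_ Ht0]].
  destruct (free_orbit_not_equidistributed t t0 (S_orbit_free t HS)) as [f [Hc [Hp Hno]]].
  exact (Hno (Ht0 f Hc Hp)).
Qed.

End Model.

Theorem theoremC1 (a b c : R) :
  0 < a -> 0 < b -> 0 < c -> a < b -> b < c ->
  b - a < c0 b c -> c0 b c < a ->
  0 < IZR (Rfloor (c / b)) * b - IZR (Rfloor (IZR (Rfloor (c / b)) * b / a)) * a ->
  IZR (Rfloor (c / b)) * b - IZR (Rfloor (IZR (Rfloor (c / b)) * b / a)) * a < 2 * a - b ->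
  (Rfloor (c / b) >= 2)%Z ->
  ((forall t : R, ~ in_S a b c t) <->
   (forall t : R, exists t0 : R,
       c0 b c + a - b <= t0 < c0 b c /\
       forall f : R -> Cplx, cont_C f -> periodic_C a f ->
         cesaro_lim_C f (fun k => Nat.iter k (Rmap a b c) t) (f t0))).
Proof.
  intros Ha Hb Hc Hab Hbc Hc0l Hc0u Hc1l Hc1u _. split.
  - apply empty_S_limits; assumption.
  - apply limits_empty_S; assumption.
Qed.
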